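(* Let $1\le k\le m$, let $l=(l_1,\dots,l_k)$ be integers with $0<l_1<\dots<l_k<m+1$, and let $\nu$ be a permutation of $[k]$. Let $f:[m]\to\mathbb{R}$ be such that the average $\frac{1}{m-l_i+1}\sum_{v=l_i}^{m}f(v)$ is the same for all $i\in[k]$, and define $g:S'_{k,m}\to\mathbb{R}$ by $g(x)=\sum_{i=1}^{k}f(x_i)$. Then $g$ is homomesic for $\underline{W}_\nu$ acting on $S'_{k,m}$.
   Context: $S_{k,m}$: integer $k$-tuples with $0<x_1<\dots<x_k<m+1$. Winching $W_i(x)=y$: $y_j=x_j$ ($j\ne i$), $y_i=x_i+1$ if $x_i+1<x_{i+1}$, else $y_i=x_{i-1}+1$, with $x_0=0$, $x_{k+1}=m+1$. Given lower bounds $l$, $S'_{k,m}=\{x\in S_{k,m}: x_i\ge l_i\ \forall i\}$; winching with lower bounds $\underline{W}_i$ agrees with $W_i$ except that its $i$-th coordinate is $\max\{(W_i(x))_i,\,l_i\}$ (it is a permutation of $S'_{k,m}$). $\underline{W}_\nu=\underline{W}_{\nu(k)}\circ\cdots\circ\underline{W}_{\nu(1)}$. A function on a finite set with a permutation $\tau$ is homomesic if its average over every $\tau$-orbit is the same constant. *)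

From HB Require Import structures.
From mathcomp Require Import all_boot all_order all_algebra all_fingroup.
Set Implicit Arguments. Unset Strict Implicit. Unset Printing Implicit Defensive.
Import Order.TTheory GRing.Theory Num.Theory.

(* Conventions: indices are 0-based, i : 'I_k stands for the paper's i+1.
   A k-tuple x = (x_1,...,x_k) is stored as  x : k.-tuple 'I_(m.+1)
   (coordinates are naturals <= m; entry j of the tuple is x_{j+1}). *)

Section Winching.
Variables (k m : nat).

Definition tup := (k.-tuple 'I_(m.+1))%type.

Definition xv (x : tup) (j : nat) : nat := nth 0 (map val x) j.

Definition Sprime (l : seq nat) : {set tup} :=
  [set x : tup | [&& 0 < xv x 0,
                     [forall j : 'I_k, (j.+1 < k) ==> (xv x j < xv x j.+1)],
                     xv x k.-1 < m.+1 &
                     [forall j : 'I_k, nth 0 l j <= xv x j]]].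

(* neighbours with the conventions x_0 = 0, x_{k+1} = m+1 *)
Definition xprev (x : tup) (i : 'I_k) : nat := if val i == 0 then 0 else xv x i.-1.
Definition xnext (x : tup) (i : 'I_k) : nat := if i.+1 == k then m.+1 else xv x i.+1.

Definition winch_coord (x : tup) (i : 'I_k) : nat :=
  if (xv x i).+1 < xnext x i then (xv x i).+1 else (xprev x i).+1.

Definition lwinch (l : seq nat) (i : 'I_k) (x : tup) : tup :=
  [tuple (if j == i then inord (maxn (winch_coord x i) (nth 0 l i)) else tnth x j) | j < k].

(* W_nu = W_{nu(k)} o ... o W_{nu(1)} : W_{nu(1)} is applied first *)
Definition lwinch_perm (l : seq nat) (nu : 'S_k) (x : tup) : tup :=
  foldl (fun y j => lwinch l (nu j) y) x (enum 'I_k).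

End Winching.

Definition homomesic (R : realFieldType) (T : finType) (S : {set T}) (tau : T -> T)
  (g : T -> R) : Prop :=
  exists c : R, forall x, x \in S ->
    ((\sum_(y <- fingraph.orbit tau x) g y) / (size (fingraph.orbit tau x))%:R = c)%R.

(** Let c be the common average and P(a) := - sum_{u=a}^{m} (f(u) - c), so that
  f(a) - c = P(a+1) - P(a) and P(l_i) = P(m+1) = 0. When W_j moves x_j to
  x_j + 1, sum_i P(x_i) grows by exactly f(x_j) - c. When x_j is blocked
  (x_{j+1} = x_j + 1) it drops to max(x_{j-1} + 1, l_j) instead, and the
  discrepancy is absorbed by correction terms P(x_{i+1}) on the adjacent pairs
  x_{i+1} = x_i + 1 whose left member comes before the right one in the cyclic
  order of the sweep W_nu started at the current stage t. The corrected
  potential Phi_t satisfies Phi_{t+1}(W_{nu(t)} x) = Phi_t(x) + f(x_{nu(t)}) - c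
  and Phi_k = Phi_0, so g = Phi_0 o W_nu - Phi_0 + k c on S'_{k,m}; summing
  along an orbit, g averages to k c. *)

From HB Require Import structures.
From mathcomp Require Import all_boot all_order all_algebra all_fingroup.
From mathcomp Require Import zify ring.
Import Order.TTheory GRing.Theory Num.Theory.

Set Implicit Arguments. Unset Strict Implicit. Unset Printing Implicit Defensive.

Section Coordinates.
Variables (k m : nat) (l : seq nat).
Local Notation T := (tup k m).
Local Notation S := (Sprime k m l).

Lemma xv_default (x : T) j : k <= j -> xv x j = 0.
Proof. by move=> h; rewrite /xv nth_default // size_map size_tuple. Qed.

Lemma xv_tnth (x : T) (i : 'I_k) : xv x i = tnth x i.
Proof. by rewrite /xv (nth_map ord0) ?size_tuple // -tnth_nth. Qed.

Lemma xv_leq (x : T) j : xv x j <= m.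
Proof.
case: (ltnP j k) => h; last by rewrite xv_default.
by rewrite (xv_tnth x (Ordinal h)) -ltnS ltn_ord.
Qed.

Lemma eq_from_xv (x y : T) : (forall j, j < k -> xv x j = xv y j) -> x = y.
Proof. by move=> h; apply: eq_from_tnth => i; apply: val_inj => /=; rewrite -!xv_tnth h. Qed.

Lemma SprimeP (x : T) :
  reflect [/\ 0 < xv x 0, forall j, j.+1 < k -> xv x j < xv x j.+1
            & forall j, j < k -> nth 0 l j <= xv x j]
          (x \in S).
Proof.
apply: (iffP idP) => [|[h0 h1 h2]].
  rewrite inE => /and4P[h0 /forallP h1 _ /forallP h2]; split => // j hj.
    by have := h1 (Ordinal (ltnW hj)); rewrite /= hj.
  exact: (h2 (Ordinal hj)).
rewrite inE h0 ltnS xv_leq /=; apply/andP; split; apply/forallP => j.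
  by apply/implyP; apply: h1.
exact: h2.
Qed.

Lemma xprev_lt (x : T) (i : 'I_k) : x \in S -> xprev x i < xv x i.
Proof.
case/SprimeP=> h0 h1 _; rewrite /xprev; case: (posnP i) => [-> //|hi].
by have := h1 i.-1; rewrite prednK // => ->.
Qed.

Lemma xv_lt_xnext (x : T) (i : 'I_k) : x \in S -> xv x i < xnext x i.
Proof.
case/SprimeP=> _ h1 _; rewrite /xnext; case: eqP => [_|ne]; first by rewrite ltnS xv_leq.
by apply: h1; have := ltn_ord i; lia.
Qed.

Lemma xnext_leq (x : T) (i : 'I_k) : xnext x i <= m.+1.
Proof. by rewrite /xnext; case: eqP => // _; apply: leqW (xv_leq _ _). Qed.

Lemma lb_leq_xv (x : T) (i : 'I_k) : x \in S -> nth 0 l i <= xv x i.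
Proof. by case/SprimeP=> _ _; apply. Qed.

Definition winch_val (x : T) (i : 'I_k) := maxn (winch_coord x i) (nth 0 l i).

Lemma winch_val_bounds (x : T) (i : 'I_k) : x \in S ->
  [/\ xprev x i < winch_val x i, winch_val x i < xnext x i,
      nth 0 l i <= winch_val x i & winch_val x i <= m].
Proof.
move=> xS; have := xprev_lt i xS; have := xv_lt_xnext i xS.
have := lb_leq_xv i xS; have := xnext_leq x i.
by rewrite /winch_val /winch_coord; case: ifP => hc; split; lia.
Qed.

Lemma xv_lwinch (x : T) (i : 'I_k) j : x \in S ->
  xv (lwinch l i x) j = if j == i then winch_val x i else xv x j.
Proof.
move=> xS; case: (ltnP j k) => hj; last first.
  by rewrite !xv_default // ifN // neq_ltn (leq_trans (ltn_ord i) hj) orbT.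
rewrite (xv_tnth _ (Ordinal hj)) tnth_mktuple (xv_tnth x (Ordinal hj)).
have -> : (Ordinal hj == i) = (j == i) by [].
case: eqP => // _; have [_ _ _ hw] := winch_val_bounds i xS; by rewrite inordK.
Qed.

Lemma lwinch_Sprime (x : T) (i : 'I_k) : x \in S -> lwinch l i x \in S.
Proof.
move=> xS; have [b1 b2 b3 _] := winch_val_bounds i xS.
case/SprimeP: (xS) => h0 h1 h2.
apply/SprimeP; split=> [|j hj|j hj]; rewrite !xv_lwinch //.
- by case: eqP => _ //; lia.
- case: (eqVneq j i) => [eji|nji].
    rewrite eji gtn_eqF //; move: b2; rewrite /xnext -eji.
    by case: eqP => // ek; move: hj; rewrite ek ltnn.
  case: eqP => [eji1|_]; last exact: h1.
  by move: b1; rewrite /xprev /= -eji1.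
- by case: eqP => [->|_]; [exact: b3 | exact: h2].
Qed.

Lemma lwinch_inj (i : 'I_k) : {in S &, injective (lwinch l i)}.
Proof.
move=> x y xS yS e.
have exy (j : nat) : j != i -> xv x j = xv y j.
  by move=> nj; have := congr1 (fun z : T => xv z j) e; rewrite !xv_lwinch // (negbTE nj).
have ep : xprev x i = xprev y i.
  by rewrite /xprev /=; case: eqP => // ne; apply: exy; lia.
have en : xnext x i = xnext y i.
  by rewrite /xnext; case: eqP => // _; apply: exy; rewrite neq_ltn ltnSn orbT.
have ew : winch_val x i = winch_val y i.
  by have := congr1 (fun z : T => xv z i) e; rewrite !xv_lwinch // eqxx.
apply: eq_from_xv => j hj; case: (eqVneq j i) => [->|]; last exact: exy.
have := xprev_lt i xS; have := xv_lt_xnext i xS; have := lb_leq_xv i xS.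
have := xprev_lt i yS; have := xv_lt_xnext i yS; have := lb_leq_xv i yS.
move: ew; rewrite /winch_val /winch_coord ep en.
by case: ifP => c1; case: ifP => c2; lia.
Qed.

End Coordinates.

(* a strictly precedes b in the rotated order s < s+1 < ... < 0 < 1 < ... < s-1 *)
Definition cycle_lt (s a b : nat) : bool :=
  if (a < s) == (b < s) then a < b else b < s.

Lemma cycle_lt_headl s b : b != s -> cycle_lt s s b.
Proof. by rewrite /cycle_lt ltnn; case: ltnP => /= hb; lia. Qed.

Lemma cycle_lt_lastl s b : cycle_lt s.+1 s b = false.
Proof. by rewrite /cycle_lt ltnSn; case: ltnP => /= hb; lia. Qed.

Lemma cycle_lt_headr s a : cycle_lt s a s = false.
Proof. by rewrite /cycle_lt ltnn; case: ltnP => /= ha; lia. Qed.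

Lemma cycle_lt_lastr s a : a != s -> cycle_lt s.+1 a s.
Proof. by rewrite /cycle_lt ltnSn; case: ltnP => /= ha; lia. Qed.

Lemma cycle_ltS s a b : a != s -> b != s -> cycle_lt s.+1 a b = cycle_lt s a b.
Proof.
by rewrite /cycle_lt !ltnS [a <= s]leq_eqVlt [b <= s]leq_eqVlt => /negbTE-> /negbTE->.
Qed.

Lemma cycle_lt_wrap n a b : a < n -> b < n -> cycle_lt n a b = cycle_lt 0 a b.
Proof. by rewrite /cycle_lt => -> ->. Qed.

Section Stage.
Variables (k : nat) (nu : 'S_k).

(* the stage at which coordinate a is winched in W_nu; k if a is not a coordinate *)
Definition stage (a : nat) : nat := index a [seq val (nu t) | t <- enum 'I_k].

Lemma stage_nu (t : 'I_k) : stage (nu t) = t.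
Proof.
rewrite /stage (index_map (f := fun t : 'I_k => val (nu t))) ?index_enum_ord //.
by move=> a b /val_inj/perm_inj.
Qed.

Lemma stage_out a : k <= a -> stage a = k.
Proof.
move=> ha; rewrite /stage memNindex; first by rewrite size_map size_enum_ord.
by apply/negP=> /mapP[t _ e]; move: (ltn_ord (nu t)); rewrite -e; lia.
Qed.

Lemma nu_onto a : a < k -> exists u : 'I_k, a = nu u.
Proof. by move=> ha; exists ((nu^-1)%g (Ordinal ha)); rewrite permKV. Qed.

Lemma stage_lt a : a < k -> stage a < k.
Proof. by case/nu_onto=> u ->; rewrite stage_nu. Qed.

Lemma stage_neq (a : nat) (t : 'I_k) : a != nu t -> stage a != t.
Proof.
case: (ltnP a k) => ha.
  have [u eu] := nu_onto ha; rewrite eu stage_nu; apply: contra => /eqP eut.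
  by rewrite (val_inj eut).
by rewrite stage_out // => _; rewrite neq_ltn ltn_ord orbT.
Qed.
End Stage.

Section Sweep.
Variables (k m : nat) (l : seq nat) (nu : 'S_k).
Local Notation T := (tup k m).
Local Notation S := (Sprime k m l).

Definition partial_winch (x : T) (s : nat) : T :=
  foldl (fun y t => lwinch l (nu t) y) x (take s (enum 'I_k)).

Lemma foldl_lwinch_Sprime (r : seq 'I_k) (x : T) : x \in S ->
  foldl (fun y t => lwinch l (nu t) y) x r \in S.
Proof. by elim: r x => [|t r IH] x xS //=; apply/IH/lwinch_Sprime. Qed.

Lemma foldl_lwinch_inj (r : seq 'I_k) :
  {in S &, injective (fun x : T => foldl (fun y t => lwinch l (nu t) y) x r)}.
Proof.
elim: r => [|t r IH] x y xS yS //= e.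
by apply: (lwinch_inj xS yS); apply: IH e; apply: lwinch_Sprime.
Qed.

Lemma lwinch_perm_Sprime : {homo lwinch_perm l nu : x / x \in S}.
Proof. by move=> x; apply: foldl_lwinch_Sprime. Qed.

Lemma lwinch_perm_inj : {in S &, injective (lwinch_perm l nu)}.
Proof. exact: foldl_lwinch_inj. Qed.

Lemma partial_winch_Sprime (x : T) s : x \in S -> partial_winch x s \in S.
Proof. exact: foldl_lwinch_Sprime. Qed.

Lemma partial_winchS (x : T) (t : 'I_k) :
  partial_winch x t.+1 = lwinch l (nu t) (partial_winch x t).
Proof.
rewrite /partial_winch (take_nth t) ?size_enum_ord // foldl_rcons.
by congr (lwinch l (nu _) _); apply: val_inj; rewrite /= nth_enum_ord.
Qed.

Lemma partial_winch_full (x : T) : partial_winch x k = lwinch_perm l nu x.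
Proof. by rewrite /partial_winch take_oversize ?size_enum_ord. Qed.

Lemma xv_partial_winch_early (x : T) (t : 'I_k) s : x \in S -> s <= t ->
  xv (partial_winch x s) (nu t) = xv x (nu t).
Proof.
move=> xS; elim: s => [|s IH] hs; first by rewrite /partial_winch take0.
have hsk : s < k by apply: leq_trans hs (ltnW (ltn_ord t)).
rewrite (partial_winchS x (Ordinal hsk)) xv_lwinch ?partial_winch_Sprime //.
case: eqP => [/val_inj/perm_inj et|_]; last exact/IH/ltnW.
by move: hs; rewrite et /= ltnn.
Qed.

End Sweep.

Lemma sum_ord_if_eq (V : nmodType) n a (x : V) :
  (\sum_(i < n) (if (i : nat) == a then x else 0) = if (a < n)%N then x else 0)%R.
Proof.
elim: n => [|n IH]; first by rewrite big_ord0.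
rewrite big_ord_recr /= IH.
case: (ltngtP a n) => h.
- by rewrite addr0 ltnS (ltnW h).
- by rewrite addr0 ltnS leqNgt h.
- by rewrite add0r h ltnSn.
Qed.

Lemma sum_ord_if_succ_eq (V : nmodType) n a (x : V) : a < n ->
  (\sum_(i < n) (if i.+1 == a then x else 0) = if (0 < a)%N then x else 0)%R.
Proof.
case: a => [_|a ha]; first by rewrite big1.
by under eq_bigr do rewrite eqSS; rewrite sum_ord_if_eq ltnW.
Qed.

Section Potential.
Variables (R : realFieldType) (k m : nat) (l : seq nat) (nu : 'S_k) (f : nat -> R) (c : R).
Local Notation T := (tup k m).
Local Notation S := (Sprime k m l).
Local Open Scope ring_scope.

Definition pot (a : nat) : R := - \sum_(a <= u < m.+1) (f u - c).

Lemma pot_out a : (m < a)%N -> pot a = 0.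
Proof. by move=> ha; rewrite /pot big_geq ?oppr0. Qed.

Lemma pot_succ a : (a <= m)%N -> f a - c = pot a.+1 - pot a.
Proof. by move=> ha; rewrite /pot (big_ltn (m := a)) ?ltnS //; ring. Qed.

Lemma pot_eq0 a : (\sum_(a <= v < m.+1) f v) / (m - a + 1)%:R = c -> pot a = 0.
Proof.
case: (leqP a m) => [ha avg|ha _]; last exact: pot_out.
rewrite /pot sumrB sumr_const_nat (_ : (m.+1 - a = m - a + 1)%N); last by lia.
by rewrite -mulr_natr -avg divfK ?pnatr_eq0 ?addn1 // subrr oppr0.
Qed.

Hypothesis lb0_pos : (0 < nth 0%N l 0)%N.
Hypothesis pot_lb : forall i : 'I_k, pot (nth 0%N l i) = 0.

Definition bond (z : T) (i : nat) : R :=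
  if (xv z i).+1 == xv z i.+1 then pot (xv z i.+1) else 0.

Definition corr (s : nat) (z : T) (i : nat) : R :=
  if cycle_lt s (stage nu i) (stage nu i.+1) then bond z i else 0.

Definition Phi (s : nat) (z : T) : R := \sum_(i < k) (pot (xv z i) - corr s z i).

Lemma bond_last (z : T) i : (k <= i.+1)%N -> bond z i = 0.
Proof. by move=> hi; rewrite /bond (xv_default z hi). Qed.

Lemma bond_xnext (z : T) (j : 'I_k) :
  bond z j = if (xv z j).+1 == xnext z j then pot (xnext z j) else 0.
Proof.
rewrite /xnext; have [ek|] := eqVneq j.+1 k; last by [].
by rewrite bond_last ?ek // pot_out //; case: ifP.
Qed.

Lemma corr_lwinch (t i : 'I_k) (z : T) : z \in S ->
  corr t.+1 (lwinch l (nu t) z) i - corr t z i =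
    (if i.+1 == nu t then bond (lwinch l (nu t) z) (nu t).-1 else 0)
  - (if (i : nat) == nu t then bond z (nu t) else 0).
Proof.
move=> zS; set j := nu t; set z' := lwinch l j z.
have st : stage nu j = t by apply: stage_nu.
have sneq (a : nat) : a != j -> stage nu a != t by apply: stage_neq.
rewrite /corr; case: (eqVneq (i : nat) j) => [eij|nij].
  by rewrite eij st cycle_lt_lastl cycle_lt_headl ?sneq ?gtn_eqF.
case: (eqVneq i.+1 j) => [e1|n1].
  by rewrite e1 st cycle_lt_headr cycle_lt_lastr ?sneq // -e1.
rewrite cycle_ltS ?sneq // /bond /z' !xv_lwinch // (negbTE nij) (negbTE n1).
by rewrite subrr subr0.
Qed.

Lemma Phi_lwinch_diff (t : 'I_k) (z : T) : z \in S ->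
  Phi t.+1 (lwinch l (nu t) z) - Phi t z =
  pot (winch_val l z (nu t)) - pot (xv z (nu t))
  - (if (0 < nu t)%N then bond (lwinch l (nu t) z) (nu t).-1 else 0) + bond z (nu t).
Proof.
move=> zS; have sub_sub (u v w y : R) : u - v - (w - y) = u - w - (v - y) by ring.
have pot_diff (i : 'I_k) : pot (xv (lwinch l (nu t) z) i) - pot (xv z i) =
    if (i : nat) == nu t then pot (winch_val l z (nu t)) - pot (xv z (nu t)) else 0.
  by rewrite xv_lwinch //; case: eqP => [->|_]; rewrite ?subrr.
rewrite /Phi !sumrB sub_sub -!sumrB.
under eq_bigr => i _ do rewrite pot_diff corr_lwinch //.
rewrite !sumrB !sum_ord_if_eq sum_ord_if_succ_eq ltn_ord //.
by rewrite opprB addrA addrAC.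
Qed.

Lemma pot_winch_val (j : 'I_k) (z : T) : z \in S ->
  pot (winch_val l z j) - (if (0 < j)%N then bond (lwinch l j z) j.-1 else 0) + bond z j
  = pot (xv z j).+1.
Proof.
move=> zS; set w := winch_val l z j.
have prev_bond : (if (0 < j)%N then bond (lwinch l j z) j.-1 else 0)
               = if (0 < j)%N && ((xprev z j).+1 == w) then pot w else 0.
  rewrite /bond !xv_lwinch //; case: (posnP j) => //= jpos.
  have -> : xprev z j = xv z j.-1 by rewrite /xprev /=; case: eqP => // j0; lia.
  have -> : (j.-1 == j) = false by apply/negbTE/eqP; lia.
  by rewrite prednK // eqxx.
rewrite prev_bond bond_xnext.
have := xprev_lt j zS; have := xv_lt_xnext j zS; have := lb_leq_xv j zS.
rewrite /w /winch_val /winch_coord; case: ifP => [free|blocked] hl hn hp.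
  have -> : maxn (xv z j).+1 (nth 0%N l j) = (xv z j).+1 by lia.
  have -> : ((xprev z j).+1 == (xv z j).+1) = false by lia.
  have -> : ((xv z j).+1 == xnext z j) = false by lia.
  by rewrite andbF subr0 addr0.
have -> : xnext z j = (xv z j).+1 by lia.
rewrite eqxx; case: ifP => [_|not_prev]; first by rewrite subrr add0r.
suff -> : maxn (xprev z j).+1 (nth 0%N l j) = nth 0%N l j by rewrite pot_lb subr0 add0r.
case: (posnP j) => [j0|jpos].
  have -> : xprev z j = 0%N by rewrite /xprev /= j0.
  by rewrite j0; apply/maxn_idPr.
by move: not_prev; rewrite jpos /= => /negbT; lia.
Qed.

Lemma Phi_lwinch (t : 'I_k) (z : T) : z \in S ->
  Phi t.+1 (lwinch l (nu t) z) - Phi t z = f (xv z (nu t)) - c.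
Proof.
move=> zS; rewrite Phi_lwinch_diff // (pot_succ (xv_leq _ _)).
by rewrite -(pot_winch_val (nu t) zS); ring.
Qed.

Lemma Phi_partial_winch (x : T) (s : nat) : x \in S -> (s <= k)%N ->
  Phi s (partial_winch l nu x s) - Phi 0 x =
  \sum_(t < k | (t < s)%N) (f (xv x (nu t)) - c).
Proof.
move=> xS; elim: s => [|s IH] hs.
  by rewrite /partial_winch take0 subrr big_pred0.
pose u : 'I_k := Ordinal hs.
have := Phi_lwinch u (partial_winch_Sprime nu s xS).
rewrite -partial_winchS xv_partial_winch_early //= => step.
rewrite (bigD1 u) ?ltnSn //= -step (eq_bigl (fun t : 'I_k => (t < s)%N)).
  by rewrite -(IH (ltnW hs)) addrA subrK.
by move=> t; rewrite ltnS [RHS]ltn_neqAle andbC -val_eqE.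
Qed.

Lemma Phi_wrap (z : T) : Phi k z = Phi 0 z.
Proof.
apply: eq_bigr => i _; congr (_ - _); rewrite /corr.
case: (ltnP i.+1 k) => hi; last by rewrite (bond_last z hi) !if_same.
by rewrite cycle_lt_wrap // stage_lt // ltnW.
Qed.

Lemma Phi_lwinch_perm (x : T) : x \in S ->
  Phi 0 (lwinch_perm l nu x) - Phi 0 x = \sum_(i < k) (f (xv x i) - c).
Proof.
move=> xS; rewrite -partial_winch_full -Phi_wrap Phi_partial_winch //.
rewrite [RHS](reindex_inj (@perm_inj _ nu)) /=.
by apply: eq_bigl => t; rewrite ltn_ord.
Qed.

End Potential.

Lemma homomesic_coboundary (R : realFieldType) (T : finType) (S : {set T})
    (tau : T -> T) (g Phi : T -> R) (c : R) :
  {homo tau : x / x \in S} -> {in S &, injective tau} ->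
  {in S, forall x, g x = Phi (tau x) - Phi x + c}%R ->
  homomesic S tau g.
Proof.
move=> tauS tau_inj g_cobound; exists c => x xS.
have sum_traject n y : y \in S ->
    (\sum_(z <- traject tau y n) g z = n%:R * c + (Phi (iter n tau y) - Phi y))%R.
  elim: n y => [|n IH] y yS; first by rewrite big_nil subrr mul0r addr0.
  by rewrite big_cons IH ?tauS // g_cobound // -iterSr -natr1; ring.
rewrite /fingraph.orbit sum_traject // (iter_order_in tauS tau_inj xS) subrr addr0 size_traject.
by rewrite mulrAC mulfV ?mul1r // pnatr_eq0 -lt0n fingraph.order_gt0.
Qed.

Theorem mainTheorem7 (R : realFieldType) (k m : nat) (l : seq nat) (nu : 'S_k)
  (f : nat -> R)
  (hk1 : 1 <= k) (hkm : k <= m)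
  (hl_size : size l = k)
  (hl0 : 0 < nth 0 l 0)
  (hl_incr : forall j : nat, j.+1 < k -> nth 0%N l j < nth 0%N l j.+1)
  (hl_last : nth 0 l k.-1 < m.+1)
  (hf : forall i j : 'I_k,
     ((\sum_(nth 0%N l i <= v < m.+1) f v) / (m - nth 0%N l i + 1)%:R
      = (\sum_(nth 0%N l j <= v < m.+1) f v) / (m - nth 0%N l j + 1)%:R)%R) :
  homomesic (@Sprime k m l) (@lwinch_perm k m l nu)
    (fun x : tup k m => (\sum_(i < k) f (val (tnth x i)))%R).
Proof.
pose c := ((\sum_(nth 0%N l 0 <= v < m.+1) f v) / (m - nth 0%N l 0 + 1)%:R)%R.
have pot_lb (i : 'I_k) : pot m f c (nth 0 l i) = 0%R.
  exact/pot_eq0/(hf i (Ordinal hk1)).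
apply: (homomesic_coboundary (Phi := Phi nu f c 0) (c := (k%:R * c)%R)).
- exact: lwinch_perm_Sprime.
- exact: lwinch_perm_inj.
move=> x xS; rewrite Phi_lwinch_perm // sumrB sumr_const card_ord mulr_natl subrK.
by apply: eq_bigr => i _; rewrite xv_tnth.
Qed.
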